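(* Let $A\in\mathbb{R}^{n\times n}$ be monotone (nonsingular with $A^{-1}\geq 0$) and let $(U_k,V_k,E_k)_{k=1}^{p}$ be a weak regular multisplitting of $A$. Let $H=\sum_{k=1}^{p}E_kU_k^{-1}V_k$. Let $\underline{U},\overline{U}\in\mathbb{R}^{n\times n}$ be nonsingular with $\overline{U}^{-1}\leq U_k^{-1}\leq\underline{U}^{-1}$ for each $k=1,\ldots,p$. (i) If $A=\overline{U}-\overline{V}$ is a regular splitting, then $\rho(H)\leq\rho(\overline{U}^{-1}\overline{V})$. (ii) If $A=\underline{U}-\underline{V}$ is a regular splitting, then $\rho(\underline{U}^{-1}\underline{V})\leq\rho(H)$.
   Context: Inequalities are entrywise; $\rho(\cdot)$ is the spectral radius. A splitting $A=U-V$ of $A\in\mathbb{R}^{n\times n}$ is weak regular if $U$ is nonsingular, $U^{-1}\geq 0$ and $U^{-1}V\geq 0$, and regular if $U$ is nonsingular, $U^{-1}\geq 0$ and $V\geq 0$. A weak regular multisplitting of $A$ is a triplet $(U_k,V_k,E_k)_{k=1}^{p}$ where each $A=U_k-V_k$ is a weak regular splitting and each $E_k\geq 0$ is an $n\times n$ diagonal matrix with $\sum_{k=1}^{p}E_k=I$. *)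

From HB Require Import structures.
From mathcomp Require Import all_boot all_order all_algebra.
From mathcomp Require Import complex.
From mathcomp Require Import reals.
Set Implicit Arguments. Unset Strict Implicit. Unset Printing Implicit Defensive.
Import Order.TTheory GRing.Theory Num.Theory.
Local Open Scope ring_scope.

Section Defs.
Variable R : rcfType.
Variable n : nat.

Definition mx_le (B C : 'M[R]_n) : Prop := forall i j, B i j <= C i j.
Definition mx_nonneg (B : 'M[R]_n) : Prop := forall i j, 0 <= B i j.

(* complex eigenvalues (with multiplicity) of a real matrix: the roots of its
   characteristic polynomial over the algebraically closed field R[i] *)
Definition eigenvalues (B : 'M[R]_n) : seq R[i] :=
  sval (closed_field_poly_normal (char_poly (map_mx (fun x : R => x%:C%C) B))).

Definition spectral_radius (B : 'M[R]_n) : R :=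
  \big[Num.max/0]_(z <- eigenvalues B) ComplexField.Normc.normc z.

Definition monotone (B : 'M[R]_n) : Prop :=
  B \in unitmx /\ mx_nonneg (invmx B).

Definition weak_regular_splitting (B U V : 'M[R]_n) : Prop :=
  B = U - V /\ U \in unitmx /\ mx_nonneg (invmx U) /\ mx_nonneg (invmx U *m V).

Definition regular_splitting (B U V : 'M[R]_n) : Prop :=
  B = U - V /\ U \in unitmx /\ mx_nonneg (invmx U) /\ mx_nonneg V.

Definition weak_regular_multisplitting (p : nat) (B : 'M[R]_n)
    (U V E : 'I_p -> 'M[R]_n) : Prop :=
  (forall k, weak_regular_splitting B (U k) (V k)) /\
  (forall k, is_diag_mx (E k)) /\
  (forall k, mx_nonneg (E k)) /\
  \sum_(k < p) E k = 1%:M.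
End Defs.

From HB Require Import structures.
From mathcomp Require Import all_boot all_order all_algebra.
From mathcomp Require Import complex.
From mathcomp Require Import boolp classical_sets reals.
From mathcomp Require Import polyrcf.
From mathcomp Require Import ring lra.
Set Implicit Arguments. Unset Strict Implicit. Unset Printing Implicit Defensive.
Import Order.TTheory GRing.Theory Num.Theory.
Local Open Scope ring_scope.

(* Write [P = sum_k E_k U_k^-1], so that [H = 1 - P A] and, since the [E_k] are diagonal
   weights summing to [1], [Uup^-1 <= P <= Ulow^-1] entrywise.  For a regular splitting
   [A = U - V] with [U^-1 <= P], a nonnegative Perron row vector [y] of [H] gives the
   vector [q = y A^-1 V >= 0] with [q U^-1 V >= rho(H) q]; dually, when [P <= U^-1], a
   Perron column vector [x] of [U^-1 V] gives [w = A^-1 V x] with [H w >= rho(U^-1 V) w].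
   The Collatz-Wielandt bound [rho(B) >= mu] for any nonzero [q >= 0] with [q B >= mu q]
   then yields both inequalities.  That bound in turn rests on the nonnegativity of
   [(t - B)^-1] for every [t > rho(B)], obtained by a connectedness argument on
   [(rho(B), +oo)]. *)

Section EntrywiseOrder.
Variable R : numDomainType.

(* Rectangular versions of [mx_nonneg] and [mx_le], to which they reduce on square matrices. *)
Definition nonnegmx m n (M : 'M[R]_(m, n)) := forall i j, 0 <= M i j.
Definition lemx m n (M N : 'M[R]_(m, n)) := forall i j, M i j <= N i j.

Lemma nonnegmx_mul m n p (M : 'M[R]_(m, n)) (N : 'M[R]_(n, p)) :
  nonnegmx M -> nonnegmx N -> nonnegmx (M *m N).
Proof. by move=> hM hN i j; rewrite mxE; apply: sumr_ge0 => k _; apply: mulr_ge0. Qed.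

Lemma lemx_mul2l m n p (C : 'M[R]_(m, n)) (M N : 'M[R]_(n, p)) :
  nonnegmx C -> lemx M N -> lemx (C *m M) (C *m N).
Proof. by move=> hC hMN i j; rewrite !mxE; apply: ler_sum => k _; apply: ler_wpM2l. Qed.

Lemma lemx_mul2r m n p (C : 'M[R]_(n, p)) (M N : 'M[R]_(m, n)) :
  nonnegmx C -> lemx M N -> lemx (M *m C) (N *m C).
Proof. by move=> hC hMN i j; rewrite !mxE; apply: ler_sum => k _; apply: ler_wpM2r. Qed.

Lemma nonnegmx_scale_le0_eq0 m n l (M : 'M[R]_(m, n)) :
  0 < l -> nonnegmx M -> lemx (l *: M) 0 -> M = 0.
Proof.
move=> l_gt0 M_ge0 lM_le0; apply/matrixP => i j; apply/eqP; rewrite mxE eq_le M_ge0 andbT.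
by have := lM_le0 i j; rewrite !mxE pmulr_rle0.
Qed.

End EntrywiseOrder.

Section SmallNonnegPerturbation.
Variable R : realFieldType.
Variables (n : nat) (D : 'M[R]_n) (c : R).
Hypotheses (D_ge0 : nonnegmx D) (c_ge0 : 0 <= c) (c_lt1 : c < 1).
Hypothesis D_rowsum : forall i, \sum_j D i j <= c.

(* Maximum principle: the largest entry [mx] of [M] satisfies [mx <= c * mx]. *)
Lemma lemx0_le_mulmx m (M : 'M[R]_(n, m)) : lemx M (D *m M) -> lemx M 0.
Proof.
move=> hM; set mx := \big[Num.max/0]_(ij : 'I_n * 'I_m) M ij.1 ij.2.
have mx_ge0 : 0 <= mx by apply: bigmax_ge_id.
have le_mx i j : M i j <= mx by apply: (le_bigmax 0 (fun ij => M ij.1 ij.2) (i, j)).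
have le_cmx i j : M i j <= c * mx.
  apply: le_trans (hM i j) _; rewrite mxE.
  apply: (@le_trans _ _ (\sum_k D i k * mx)).
    by apply: ler_sum => k _; apply: ler_wpM2l.
  by rewrite -mulr_suml; apply: ler_wpM2r.
have mx_le : mx <= c * mx.
  by apply: bigmax_le => [|[i j] _]; [apply: mulr_ge0 | apply: le_cmx].
move=> i j; rewrite mxE; apply: le_trans (le_mx i j) _.
have c1_gt0 : 0 < 1 - c by rewrite subr_gt0.
by rewrite -(pmulr_lle0 _ c1_gt0); lra.
Qed.

Lemma unitmx_1Bmx : (1%:M - D) \in unitmx.
Proof.
rewrite -unitmx_tr unitmxE unitfE; apply/negP => /det0P [v /negP v_neq0 hv].
apply: v_neq0; apply/eqP/rowP => j; rewrite mxE; apply/eqP; rewrite -normr_le0.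
have hvD : v^T = D *m v^T.
  apply/eqP; rewrite -subr_eq0 -{1}[v^T]mul1mx -mulmxBl.
  by rewrite -[1%:M - D]trmxK -trmx_mul hv trmx0.
have abs_v_le0 : lemx (map_mx Num.norm v^T) 0.
  apply: lemx0_le_mulmx => i k; rewrite (ord1 k) [in X in X <= _]hvD !mxE.
  apply: le_trans (ler_norm_sum _ _ _) _; apply: ler_sum => l _.
  by rewrite !mxE normrM (ger0_norm (D_ge0 _ _)).
by have := abs_v_le0 j 0; rewrite !mxE.
Qed.

Lemma invmx_1Bmx_ge0 : nonnegmx (invmx (1%:M - D)).
Proof.
set X := invmx (1%:M - D).
have X_eq : X = 1%:M + D *m X.
  by apply/eqP; rewrite -subr_eq -[X in X - _]mul1mx -mulmxBl mulmxV ?unitmx_1Bmx.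
have negX_le0 : lemx (- X) 0.
  apply: lemx0_le_mulmx => i j.
  rewrite {1}X_eq mulmxN !mxE opprD.
  have : 0 <= (1 : R) *+ (i == j) by rewrite mulrn_wge0.
  lra.
by move=> i j; have := negX_le0 i j; rewrite !mxE oppr_le0.
Qed.

End SmallNonnegPerturbation.

Lemma invmx_1Bscalemx_ge0 (R : realFieldType) n (C : 'M[R]_n) : nonnegmx C ->
  exists2 d : R, 0 < d & forall e, 0 <= e -> e < d ->
    (1%:M - e *: C) \in unitmx /\ nonnegmx (invmx (1%:M - e *: C)).
Proof.
move=> C_ge0; set S := \sum_i \sum_k C i k.
have rowsum_ge0 i : 0 <= \sum_k C i k by apply: sumr_ge0 => k _.
have S_ge0 : 0 <= S by apply: sumr_ge0.
have rowsum_le i : \sum_k C i k <= S.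
  by rewrite /S [X in _ <= X](bigD1 i) //= lerDl; apply: sumr_ge0 => l _.
exists (S + 1)^-1; first by rewrite invr_gt0; lra.
move=> e e_ge0 e_lt.
have eS_lt1 : e * S < 1.
  have : e * (S + 1) < 1 by rewrite -ltr_pdivlMr ?mul1r; lra.
  lra.
have eC_ge0 : nonnegmx (e *: C) by move=> i j; rewrite mxE; apply: mulr_ge0.
have eC_rowsum i : \sum_k (e *: C) i k <= e * S.
  under eq_bigr do rewrite mxE.
  by rewrite -mulr_sumr; apply: ler_wpM2l.
split; first exact: (unitmx_1Bmx eC_ge0 (mulr_ge0 e_ge0 S_ge0) eS_lt1 eC_rowsum).
exact: (invmx_1Bmx_ge0 eC_ge0 (mulr_ge0 e_ge0 S_ge0) eS_lt1 eC_rowsum).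
Qed.

Lemma char_poly_trmx (F : comNzRingType) n (A : 'M[F]_n) : char_poly A^T = char_poly A.
Proof.
rewrite /char_poly /char_poly_mx -det_tr; congr (\det _).
by rewrite linearB /= tr_scalar_mx map_trmx trmxK.
Qed.

Lemma horner_char_poly_mx (F : comNzRingType) n (A : 'M[F]_n) x :
  map_mx (horner_eval x) (char_poly_mx A) = x%:M - A.
Proof.
apply/matrixP => i j; rewrite !mxE /horner_eval /=.
by rewrite hornerD hornerN hornerMn hornerX hornerC.
Qed.

Lemma horner_char_poly (F : comNzRingType) n (A : 'M[F]_n) x :
  (char_poly A).[x] = \det (x%:M - A).
Proof. by rewrite -horner_char_poly_mx det_map_mx. Qed.

Lemma horner_adj_char_poly_mx (F : comNzRingType) n (A : 'M[F]_n) x i j :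
  (\adj (char_poly_mx A) i j).[x] = \adj (x%:M - A) i j.
Proof. by rewrite -horner_char_poly_mx -map_mx_adj [in RHS]/map_mx [in RHS]mxE. Qed.

Lemma invmx_mul (F : comUnitRingType) n (A B : 'M[F]_n) :
  A \in unitmx -> B \in unitmx -> invmx (A *m B) = invmx B *m invmx A.
Proof.
move=> A_unit B_unit; have AB_unit : A *m B \in unitmx by rewrite unitmx_mul A_unit.
rewrite -[RHS](mulKmx AB_unit).
have -> : A *m B *m (invmx B *m invmx A) = 1%:M by rewrite -mulmxA mulKVmx // mulmxV.
by rewrite mulmx1.
Qed.

Section Eigenvalues.
Variable R : rcfType.
Local Notation normc := (@ComplexField.Normc.normc R).
Local Notation toC := (fun x : R => x%:C%C).

Lemma normcC (z : R[i]) : (normc z)%:C%C = `|z|.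
Proof. by case: z. Qed.

Lemma normc_ge0 (z : R[i]) : 0 <= normc z.
Proof. by case: z => a b; apply: sqrtr_ge0. Qed.

Lemma normc_real (x : R) : normc x%:C%C = `|x|.
Proof. by rewrite /= expr0n /= addr0 sqrtr_sqr. Qed.

Lemma mem_eigenvalues n (B : 'M[R]_n) z :
  (z \in eigenvalues B) = eigenvalue (map_mx toC B) z.
Proof.
rewrite eigenvalue_root_char /eigenvalues; case: closed_field_poly_normal => r /= ->.
by rewrite (monicP (char_poly_monic _)) scale1r root_prod_XsubC.
Qed.

Lemma eigenvalues_tr n (B : 'M[R]_n) : eigenvalues B^T = eigenvalues B.
Proof. by rewrite /eigenvalues -map_trmx char_poly_trmx. Qed.

Lemma spectral_radius_tr n (B : 'M[R]_n) : spectral_radius B^T = spectral_radius B.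
Proof. by rewrite /spectral_radius eigenvalues_tr. Qed.

Lemma spectral_radius_ge0 n (B : 'M[R]_n) : 0 <= spectral_radius B.
Proof. exact: bigmax_ge_id. Qed.

Lemma normc_le_spectral_radius n (B : 'M[R]_n) z :
  z \in eigenvalues B -> normc z <= spectral_radius B.
Proof. by move=> z_eig; apply: (le_bigmax_seq 0 z predT normc z_eig). Qed.

Lemma spectral_radius_eigenvalue n (B : 'M[R]_n) : 0 < spectral_radius B ->
  exists2 z, z \in eigenvalues B & normc z = spectral_radius B.
Proof.
rewrite /spectral_radius; elim: (eigenvalues B) => [|a s IH]; first by rewrite big_nil ltxx.
rewrite big_cons; have [_ _|_ /IH [z zs <-]] := leP (\big[Num.max/0]_(z <- s) normc z) (normc a).
  by exists a; rewrite ?mem_head.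
by exists z; rewrite // in_cons zs orbT.
Qed.

Lemma unitmx_gt_spectral_radius n (B : 'M[R]_n) t :
  spectral_radius B < t -> (t%:M - B) \in unitmx.
Proof.
move=> rho_lt_t; apply: contraLR rho_lt_t; rewrite -leNgt unitmxE unitfE negbK => det0.
have : \det (map_mx toC (t%:M - B)) == 0 by rewrite det_map_mx (eqP det0) rmorph0.
rewrite map_mxB /= map_scalar_mx /= => /det0P [v v_neq0 hv].
have : eigenvalue (map_mx toC B) t%:C%C.
  apply/eigenvalueP; exists v => //; apply/eqP; rewrite -subr_eq0 -mul_mx_scalar -mulmxBr.
  by rewrite -opprB mulmxN oppr_eq0 hv.
rewrite -mem_eigenvalues => /normc_le_spectral_radius; rewrite normc_real.
by apply: le_trans; apply: ler_norm.
Qed.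

(* The entrywise modulus of a complex eigenvector is a nonnegative real subeigenvector. *)
Lemma eigenvalue_nonneg_row n (B : 'M[R]_n) z : nonnegmx B -> z \in eigenvalues B ->
  exists y : 'rV[R]_n, [/\ nonnegmx y, y != 0 & lemx (normc z *: y) (y *m B)].
Proof.
move=> B_ge0; rewrite mem_eigenvalues => /eigenvalueP [v hv v_neq0].
exists (map_mx normc v); split.
- by move=> i j; rewrite mxE; apply: normc_ge0.
- apply: contra_neq v_neq0 => /rowP v0; apply/rowP => j.
  by have := v0 j; rewrite !mxE => /ComplexField.Normc.eq0_normc.
- move=> i j; rewrite (ord1 i) !mxE -ComplexField.Normc.normcM.
  have -> : z * v 0 j = (v *m map_mx toC B) 0 j by rewrite hv !mxE.
  rewrite -lecR normcC mxE rmorph_sum /=.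
  apply: le_trans (ler_norm_sum _ _ _) _; apply: ler_sum => k _.
  by rewrite !mxE normrM -normcC rmorphM /= -normcC normc_real ger0_norm.
Qed.

Lemma perron_row n (B : 'M[R]_n) : nonnegmx B -> 0 < spectral_radius B ->
  exists y : 'rV[R]_n,
    [/\ nonnegmx y, y != 0 & lemx (spectral_radius B *: y) (y *m B)].
Proof. by move=> B_ge0 /spectral_radius_eigenvalue [z /(eigenvalue_nonneg_row B_ge0) + <-]. Qed.

Lemma perron_col n (B : 'M[R]_n) : nonnegmx B -> 0 < spectral_radius B ->
  exists x : 'cV[R]_n,
    [/\ nonnegmx x, x != 0 & lemx (spectral_radius B *: x) (B *m x)].
Proof.
move=> B_ge0; rewrite -spectral_radius_tr => /(perron_row (B := B^T)) [].
  by move=> i j; rewrite mxE.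
move=> y [y_ge0 y_neq0 yB_ge]; exists y^T; split.
- by move=> i j; rewrite mxE.
- by rewrite trmx_eq0.
- by move=> i j; have := yB_ge j i; rewrite -[B in B *m _]trmxK -trmx_mul !mxE.
Qed.

End Eigenvalues.

Lemma invrM_ge0E (R : realFieldType) (a d : R) : d != 0 -> (0 <= d^-1 * a) = (0 <= a * d).
Proof.
move=> d_neq0; have -> : d^-1 * a = (a * d) * (d^-1 ^+ 2) by rewrite expr2; field.
by rewrite pmulr_lge0 // exprn_even_gt0 //= invr_eq0.
Qed.

Section Resolvent.
Variables (R : realType) (n : nat) (B : 'M[R]_n).
Local Notation rho := (spectral_radius B).

(* The sign of the entry [(i, j)] of [(s - B)^-1 = adj (s - B) / det (s - B)] is that
   of a polynomial in [s], hence varies continuously in [s]. *)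
Definition resolvent_sign_poly i j : {poly R} := \adj (char_poly_mx B) i j * char_poly B.

Lemma resolvent_ge0E s i j : rho < s ->
  (0 <= invmx (s%:M - B) i j) = (0 <= (resolvent_sign_poly i j).[s]).
Proof.
move=> rho_lt_s; have s_unit := unitmx_gt_spectral_radius rho_lt_s.
rewrite /invmx s_unit mxE hornerM horner_adj_char_poly_mx horner_char_poly.
by rewrite invrM_ge0E // -unitfE -unitmxE.
Qed.

Lemma resolvent_ge0_large : nonnegmx B ->
  exists T, forall s, T < s -> nonnegmx (invmx (s%:M - B)).
Proof.
move=> B_ge0; have [d d_gt0 small_ge0] := invmx_1Bscalemx_ge0 B_ge0.
exists d^-1 => s lt_s.
have s_gt0 : 0 < s by apply: lt_trans lt_s; rewrite invr_gt0.
have [unit_s inv_ge0] : (1%:M - s^-1 *: B) \in unitmx /\ nonnegmx (invmx (1%:M - s^-1 *: B)).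
  by apply: small_ge0; rewrite ?invr_ge0 ?ltW // -(invrK d) ltf_pV2 ?posrE ?invr_gt0.
have -> : s%:M - B = s *: (1%:M - s^-1 *: B).
  by rewrite scalerBr scalerA mulfV ?gt_eqF // scale1r scalemx1.
rewrite invmxZ ?unitmxZ ?unitfE ?gt_eqF // => i j.
by rewrite mxE mulr_ge0 // invr_ge0 ltW.
Qed.

Lemma resolvent_ge0_right_limit t : rho < t ->
  (forall s, t < s -> nonnegmx (invmx (s%:M - B))) -> nonnegmx (invmx (t%:M - B)).
Proof.
move=> rho_lt_t right_ge0 i j; rewrite resolvent_ge0E // leNgt; apply/negP => f_neg.
set f := resolvent_sign_poly i j in f_neg *.
have negf_gt0 : 0 < - f.[t] by rewrite oppr_gt0.
have [d d_gt0 near_t] := poly_cont t f negf_gt0.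
have f_ge0 : 0 <= f.[t + d / 2].
  by rewrite -resolvent_ge0E; [apply: right_ge0 | ]; lra.
have near : `|t + d / 2 - t| < d by rewrite addrAC subrr add0r ger0_norm; lra.
have := near_t _ near; have := ler_norm (f.[t + d / 2] - f.[t]); lra.
Qed.

Lemma resolvent_ge0_left_nbhd t : t%:M - B \in unitmx -> nonnegmx (invmx (t%:M - B)) ->
  exists2 d, 0 < d & forall s, t - d < s <= t -> nonnegmx (invmx (s%:M - B)).
Proof.
move=> t_unit Rt_ge0; have [d d_gt0 small_ge0] := invmx_1Bscalemx_ge0 Rt_ge0.
exists d => // s /andP [lt_s s_le]; set Rt := invmx (t%:M - B).
have e_ge0 : 0 <= t - s by lra.
have e_lt_d : t - s < d by lra.
have [e_unit inv_e_ge0] := small_ge0 _ e_ge0 e_lt_d.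
have -> : s%:M - B = (t%:M - B) *m (1%:M - (t - s) *: Rt).
  rewrite mulmxBr mulmx1 -scalemxAr mulmxV // scalemx1 raddfB /=.
  by rewrite opprB addrAC addrCA subrr addr0.
by rewrite invmx_mul //; apply: nonnegmx_mul.
Qed.

(* It holds for large [t]; were it to fail somewhere, the supremum of the bad [s > rho]
   would contradict both limit lemmas above. *)
Lemma resolvent_ge0 t : nonnegmx B -> rho < t -> nonnegmx (invmx (t%:M - B)).
Proof.
move=> B_ge0 rho_lt_t; apply: contrapT => t_bad.
pose E (s : R) := rho < s /\ ~ nonnegmx (invmx (s%:M - B)).
have [T large_ge0] := resolvent_ge0_large B_ge0.
have E_le_T s : E s -> s <= T by move=> [_ s_bad]; rewrite leNgt; apply/negP => /large_ge0.
have supE : has_sup E by split; [exists t | exists T => s /E_le_T].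
have t_le_sup : t <= sup E by apply: sup_upper_bound.
have rho_lt_sup : rho < sup E by apply: lt_le_trans t_le_sup.
have sup_ge0 : nonnegmx (invmx ((sup E)%:M - B)).
  apply: resolvent_ge0_right_limit => // s sup_lt_s; apply: contrapT => s_bad.
  have : s <= sup E by apply: sup_upper_bound => //; split => //; apply: lt_trans sup_lt_s.
  by rewrite leNgt sup_lt_s.
have [d d_gt0 near_ge0] := resolvent_ge0_left_nbhd (unitmx_gt_spectral_radius rho_lt_sup) sup_ge0.
have [s Es lt_s] := sup_adherent d_gt0 supE.
have [_ s_bad] := Es.
by apply: s_bad; apply: near_ge0; apply/andP; split; [exact: lt_s | exact: sup_upper_bound].
Qed.

End Resolvent.

Section CollatzWielandt.
Variables (R : realType) (n : nat) (B : 'M[R]_n).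
Hypothesis B_ge0 : nonnegmx B.

(* If [mu > rho B] then [x = x (mu - B) (mu - B)^-1] would be [<= 0]. *)
Lemma collatz_wielandt_row (x : 'rV[R]_n) mu :
  nonnegmx x -> x != 0 -> lemx (mu *: x) (x *m B) -> mu <= spectral_radius B.
Proof.
move=> x_ge0 x_neq0 xB_ge; rewrite leNgt; apply: contra x_neq0 => rho_lt_mu.
have w_le0 j : (x *m (mu%:M - B)) 0 j <= 0.
  by have := xB_ge 0 j; rewrite mulmxBr mul_mx_scalar !mxE subr_le0.
have x_eq : x = x *m (mu%:M - B) *m invmx (mu%:M - B).
  by rewrite mulmxK // unitmx_gt_spectral_radius.
apply/eqP/(nonnegmx_scale_le0_eq0 ltr01 x_ge0) => i j.
rewrite scale1r x_eq (ord1 i) [X in X <= _]mxE mxE; apply: sumr_le0 => k _.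
by rewrite mulrC; apply: mulr_ge0_le0; [exact: resolvent_ge0 | exact: w_le0].
Qed.

End CollatzWielandt.

Lemma collatz_wielandt_col (R : realType) n (B : 'M[R]_n) (x : 'cV[R]_n) mu :
  nonnegmx B -> nonnegmx x -> x != 0 -> lemx (mu *: x) (B *m x) -> mu <= spectral_radius B.
Proof.
move=> B_ge0 x_ge0 x_neq0 xB_ge; rewrite -spectral_radius_tr.
apply: (@collatz_wielandt_row _ _ _ _ x^T).
- by move=> i j; rewrite mxE.
- by move=> i j; rewrite mxE.
- by rewrite trmx_eq0.
- by move=> i j; have := xB_ge j i; rewrite -trmx_mul !mxE.
Qed.

Section IterationComparison.
Variables (R : realType) (n : nat) (A P U V : 'M[R]_n).
Hypotheses (A_unit : A \in unitmx) (Ainv_ge0 : nonnegmx (invmx A)).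
Hypothesis H_ge0 : nonnegmx (1%:M - P *m A).
Hypothesis splitting : regular_splitting A U V.

Let V_eq : V = U - A.
Proof. by case: splitting => ->; rewrite opprB addrC subrK. Qed.

Lemma spectral_radius_le_regular : lemx (invmx U) P ->
  spectral_radius (1%:M - P *m A) <= spectral_radius (invmx U *m V).
Proof.
have [_ [U_unit [Q_ge0 V_ge0]]] := splitting.
set H := 1%:M - P *m A; set Q := invmx U => Q_le_P.
have [rho_le0|l_gt0] := leP (spectral_radius H) 0.
  exact: le_trans rho_le0 (spectral_radius_ge0 _).
set l := spectral_radius H in l_gt0 *.
have [y [y_ge0 y_neq0 yH_ge]] := perron_row H_ge0 l_gt0; rewrite -/H -/l in yH_ge.
set z := y *m invmx A; have z_ge0 : nonnegmx z by apply: nonnegmx_mul.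
have yP_le : lemx (y *m P) ((1 - l) *: z).
  have -> : y *m P = (y - y *m H) *m invmx A.
    by rewrite /H mulmxBr mulmx1 opprB addrC subrK mulmxA mulmxK.
  rewrite /z scalemxAl; apply: lemx_mul2r => // i j.
  by have := yH_ge i j; rewrite !mxE; lra.
have yQ_le : lemx (y *m Q) (y *m P) by apply: lemx_mul2l.
have zVQ : z *m V *m Q = z - y *m Q.
  by rewrite V_eq mulmxBr mulmxBl -mulmxA mulmxV // mulmx1 /z mulmxKV.
have lz_le : lemx (l *: z) (z *m V *m Q).
  by rewrite zVQ => i j; have := yP_le i j; have := yQ_le i j; rewrite !mxE; lra.
apply: (@collatz_wielandt_row _ _ _ _ (z *m V)).
- exact: nonnegmx_mul.
- exact: nonnegmx_mul.
- apply: contra_neq y_neq0 => zV0.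
  have z0 : z = 0.
    by apply: nonnegmx_scale_le0_eq0 l_gt0 z_ge0 _; rewrite -[0](mul0mx _ Q) -zV0.
  by rewrite -(mulmxKV A_unit y) -/z z0 mul0mx.
- by rewrite mulmxA scalemxAl; apply: lemx_mul2r.
Qed.

Lemma spectral_radius_ge_regular : lemx P (invmx U) ->
  spectral_radius (invmx U *m V) <= spectral_radius (1%:M - P *m A).
Proof.
have [_ [U_unit [Q_ge0 V_ge0]]] := splitting.
set H := 1%:M - P *m A; set Q := invmx U => P_le_Q.
have T_ge0 : nonnegmx (Q *m V) by apply: nonnegmx_mul.
have [rho_le0|l_gt0] := leP (spectral_radius (Q *m V)) 0.
  exact: le_trans rho_le0 (spectral_radius_ge0 _).
set l := spectral_radius (Q *m V) in l_gt0 *.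
have [x [x_ge0 x_neq0 Tx_ge]] := perron_col T_ge0 l_gt0.
set u := V *m x; have u_ge0 : nonnegmx u by apply: nonnegmx_mul.
set w := invmx A *m u; have w_ge0 : nonnegmx w by apply: nonnegmx_mul.
have Hw : H *m w = w - P *m u by rewrite /H mulmxBl mul1mx -mulmxA /w mulKVmx.
have Pu_le : lemx (P *m u) (Q *m u) by apply: lemx_mul2r.
have wQu : w - Q *m u = invmx A *m V *m (Q *m u).
  rewrite [in RHS]V_eq mulmxBr mulmxBl mulVmx // mul1mx.
  by rewrite -mulmxA (mulmxA U) mulmxV // mul1mx.
have lw_le : lemx (l *: w) (w - Q *m u).
  rewrite wQu /w scalemxAr -mulmxA; apply: lemx_mul2l => //.
  by rewrite /u scalemxAr; apply: lemx_mul2l => //; rewrite mulmxA.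
apply: (@collatz_wielandt_col _ _ _ w) => //.
- apply: contra_neq x_neq0 => w0.
  have u0 : u = 0 by rewrite -(mulKVmx A_unit u) -/w w0 mulmx0.
  by apply: nonnegmx_scale_le0_eq0 l_gt0 x_ge0 _; rewrite -[0](mulmx0 _ Q) -u0 mulmxA.
- by rewrite Hw => i j; have := lw_le i j; have := Pu_le i j; rewrite !mxE; lra.
Qed.

End IterationComparison.

Section Multisplitting.
Variables (R : rcfType) (n p : nat) (A : 'M[R]_n) (U V E : 'I_p -> 'M[R]_n).
Hypothesis multisplitting : weak_regular_multisplitting A U V E.

Lemma multisplitting_iteration_matrixE :
  \sum_(k < p) E k *m (invmx (U k) *m V k) =
  1%:M - (\sum_(k < p) E k *m invmx (U k)) *m A.
Proof.
have [splitting [_ [_ E_sum1]]] := multisplitting.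
rewrite mulmx_suml -E_sum1 -sumrB; apply: eq_bigr => k _.
have [A_eq [U_unit _]] := splitting k.
have -> : V k = U k - A by rewrite A_eq opprB addrC subrK.
by rewrite mulmxBr mulVmx // mulmxBr mulmx1 mulmxA.
Qed.

Lemma multisplitting_iteration_matrix_ge0 :
  nonnegmx (\sum_(k < p) E k *m (invmx (U k) *m V k)).
Proof.
have [splitting [_ [E_ge0 _]]] := multisplitting.
move=> i j; rewrite summxE; apply: sumr_ge0 => k _; apply: nonnegmx_mul; first exact: E_ge0.
by case: (splitting k) => _ [_ []].
Qed.

End Multisplitting.

Lemma lemx_diag_combination (R : numDomainType) n p (E M : 'I_p -> 'M[R]_n) L N :
  (forall k, is_diag_mx (E k)) -> (forall k, nonnegmx (E k)) -> \sum_k E k = 1%:M ->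
  (forall k, lemx L (M k) /\ lemx (M k) N) ->
  lemx L (\sum_k E k *m M k) /\ lemx (\sum_k E k *m M k) N.
Proof.
move=> E_diag E_ge0 E_sum1 M_bounds.
have sumE_ii i : \sum_k E k i i = 1.
  by have := congr1 (fun M : 'M[R]_n => M i i) E_sum1; rewrite /= summxE mxE eqxx.
have sumEM_ij i j : (\sum_k E k *m M k) i j = \sum_k E k i i * M k i j.
  rewrite summxE; apply: eq_bigr => k _; rewrite mxE (bigD1 i) //= big1 ?addr0 // => l l_neq_i.
  by have /is_diag_mxP -> := E_diag k; rewrite ?mul0r // eq_sym.
split=> i j; rewrite sumEM_ij.
- rewrite -[L i j]mul1r -(sumE_ii i) mulr_suml; apply: ler_sum => k _.
  by apply: ler_wpM2l; [exact: E_ge0 | case: (M_bounds k) => + _; apply].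
- rewrite -[N i j]mul1r -(sumE_ii i) mulr_suml; apply: ler_sum => k _.
  by apply: ler_wpM2l; [exact: E_ge0 | case: (M_bounds k) => _; apply].
Qed.

Unset Implicit Arguments.
Set Strict Implicit.

Theorem corollary5p10 (R : realType) (n p : nat) (A : 'M[R]_n)
    (U V E : 'I_p -> 'M[R]_n) (Ulow Uup : 'M[R]_n) :
  monotone A ->
  weak_regular_multisplitting A U V E ->
  Ulow \in unitmx -> Uup \in unitmx ->
  (forall k, mx_le (invmx Uup) (invmx (U k)) /\ mx_le (invmx (U k)) (invmx Ulow)) ->
  let H := \sum_(k < p) (E k *m (invmx (U k) *m V k)) in
  (forall Vup : 'M[R]_n, regular_splitting A Uup Vup ->
     spectral_radius H <= spectral_radius (invmx Uup *m Vup)) /\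
  (forall Vlow : 'M[R]_n, regular_splitting A Ulow Vlow ->
     spectral_radius (invmx Ulow *m Vlow) <= spectral_radius H).
Proof.
(* The invertibility of [Ulow] and [Uup] is also part of [regular_splitting]. *)
move=> [A_unit Ainv_ge0] multisplitting _ _ U_bounds H.
have [_ [E_diag [E_ge0 E_sum1]]] := multisplitting.
have [Uup_le_P P_le_Ulow] := lemx_diag_combination E_diag E_ge0 E_sum1 U_bounds.
have H_ge0 := multisplitting_iteration_matrix_ge0 multisplitting.
rewrite /H (multisplitting_iteration_matrixE multisplitting) in H_ge0 *.
split=> [Vup | Vlow] splitting.
- exact: spectral_radius_le_regular.
- exact: spectral_radius_ge_regular.
Qed.
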